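(* Let $(X,\Sigma)$ be a measurable space, let $\boldsymbol{\mu}=(\mu_t)_{t\in[0,\infty)}$ be a family of monotone measures on $\Sigma$, let $(\mathcal{E}_t)_{t\ge 0}$ be a process of pavings and let $\mathscr{A}=\{\mathsf{A}_t(\cdot|E)\colon E\in\mathcal{E}_t,\,t\ge 0\}$ be a parametric family of conditional aggregation operators. Suppose that $\boldsymbol{\mu}$ is nonincreasing and $\mathscr{A}$ is nonincreasing. Then for every fixed $f\in\mathbf{F}$ the function $[0,\infty)\ni t\mapsto \boldsymbol{\mu}_{\mathscr{A}}(f,t)$ is nonincreasing.
   Context: $\Sigma^0=\Sigma\setminus\{\emptyset\}$. $\mathbf{F}$ denotes the set of all $\Sigma$-measurable, nonnegative, bounded functions $f\colon X\to[0,\infty)$. A monotone measure is a map $\mu\colon\Sigma\to[0,\infty]$ with $\mu(B)\le\mu(C)$ whenever $B\subseteq C$, $\mu(\emptyset)=0$ and $\mu(X)>0$. For $E\in\Sigma^0$, a conditional aggregation operator (CAO) w.r.t. $E$ is a map $\mathsf{A}(\cdot|E)\colon\mathbf{F}\to[0,\infty]$ such that (C1) $\mathsf{A}(f|E)\le\mathsf{A}(g|E)$ whenever $f(x)\le g(x)$ for all $x\in E$, and (C2) $\mathsf{A}(\mathbf{1}_{X\setminus E}|E)=0$. A process of pavings is a family $(\mathcal{E}_t)_{t\ge0}$ with $\emptyset\in\mathcal{E}_t\subseteq\Sigma$ for all $t$; $\mathcal{E}_t^0=\mathcal{E}_t\setminus\{\emptyset\}$. A parametric family of CAOs (pFCA)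 $\{\mathsf{A}_t(\cdot|E)\colon E\in\mathcal{E}_t,\,t\ge0\}$ consists of CAOs $\mathsf{A}_t(\cdot|E)$ w.r.t. $E$ for each $t$ and $E\in\mathcal{E}_t^0$, with the convention $\mathsf{A}_t(\cdot|\emptyset)=\infty$. The generalized level measure is $\boldsymbol{\mu}_{\mathscr{A}}(f,t)=\sup\{\mu_t(E)\colon \mathsf{A}_t(f|E)\ge t,\ E\in\mathcal{E}_t\}$ for $t\ge0$. The family $\boldsymbol{\mu}$ is nonincreasing if $\mu_s(E)\ge\mu_t(E)$ for all $E\in\Sigma$ and all $s<t$. The pFCA is nonincreasing if $\mathcal{E}_t\subseteq\mathcal{E}_s$ and $\mathsf{A}_s(f|E)\ge\mathsf{A}_t(f|E)$ for all $f\in\mathbf{F}$, all $E\in\mathcal{E}_t^0$ and all $0\le s<t$. *)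

From HB Require Import structures.
From mathcomp Require Import all_boot all_order all_algebra.
From mathcomp Require Import all_classical all_reals.
From mathcomp Require Import ereal numfun measure lebesgue_measure.
Set Implicit Arguments. Unset Strict Implicit. Unset Printing Implicit Defensive.
Import Order.TTheory GRing.Theory Num.Theory.
Local Open Scope classical_set_scope.
Local Open Scope ring_scope.
Local Open Scope ereal_scope.

Section Defs.
Context {d : measure_display} {T : measurableType d} {R : realType}.

Definition Fset (f : T -> R) : Prop :=
  measurable_fun setT f /\ (forall x, (0 <= f x)%R) /\
  exists M : R, forall x, (f x <= M)%R.

Definition monotone_measure (mu : set T -> \bar R) : Prop :=
  (forall B, measurable B -> 0 <= mu B) /\
  (forall B C, measurable B -> measurable C -> B `<=` C -> mu B <= mu C) /\
  mu set0 = 0 /\ 0 < mu setT.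

Definition CAO (E : set T) (A : (T -> R) -> \bar R) : Prop :=
  (forall f, Fset f -> 0 <= A f) /\
  (forall f g, Fset f -> Fset g -> (forall x, E x -> (f x <= g x)%R) ->
     A f <= A g) /\
  A (\1_(~` E)) = 0.

Definition paving_process (Ec : R -> set (set T)) : Prop :=
  forall t, (0 <= t)%R -> Ec t set0 /\ Ec t `<=` measurable.

Definition pFCA (Ec : R -> set (set T)) (A : R -> set T -> (T -> R) -> \bar R)
  : Prop :=
  (forall t E, (0 <= t)%R -> Ec t E -> E <> set0 -> CAO E (A t E)) /\
  (forall t f, A t set0 f = +oo).

Definition gen_level_measure (mu : R -> set T -> \bar R)
  (Ec : R -> set (set T)) (A : R -> set T -> (T -> R) -> \bar R)
  (f : T -> R) (t : R) : \bar R :=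
  ereal_sup [set mu t E | E in [set E | Ec t E /\ t%:E <= A t E f]].

Definition mu_nonincreasing (mu : R -> set T -> \bar R) : Prop :=
  forall E s t, measurable E -> (0 <= s)%R -> (s < t)%R -> mu t E <= mu s E.

Definition pFCA_nonincreasing (Ec : R -> set (set T))
  (A : R -> set T -> (T -> R) -> \bar R) : Prop :=
  forall s t, (0 <= s)%R -> (s < t)%R ->
    Ec t `<=` Ec s /\
    (forall f E, Fset f -> Ec t E -> E <> set0 -> A t E f <= A s E f).

End Defs.

From HB Require Import structures.
From mathcomp Require Import all_boot all_order all_algebra.
From mathcomp Require Import all_classical all_reals.
From mathcomp Require Import ereal numfun measure lebesgue_measure.
Import Order.TTheory GRing.Theory Num.Theory.
Local Open Scope classical_set_scope.
Local Open Scope ring_scope.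
Local Open Scope ereal_scope.

(* For s < t, every set admissible at level t is admissible at level s:
   the pavings shrink and A_s E f >= A_t E f >= t > s (for E = set0 both
   aggregations are +oo).  On such a set mu_t E <= mu_s E, so the supremum
   defining the level measure at t is dominated by the one at s. *)

Lemma ereal_sup_le_image (I : Type) (R : realType) (P Q : set I)
    (g h : I -> \bar R) :
  (forall i, P i -> Q i /\ g i <= h i) ->
  ereal_sup (g @` P) <= ereal_sup (h @` Q).
Proof.
move=> PQ; apply: ge_ereal_sup => _ [i Pi <-].
have [Qi gh] := PQ i Pi.
by apply: le_trans gh _; apply: ereal_sup_ubound; exists i.
Qed.

Section level_measure_antitone.
Context {d : measure_display} {T : measurableType d} {R : realType}.
Variables (mu : R -> set T -> \bar R) (Ec : R -> set (set T)).
Variable A : R -> set T -> (T -> R) -> \bar R.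
Hypothesis A_set0 : forall t f, A t set0 f = +oo.
Hypothesis A_antitone : pFCA_nonincreasing Ec A.

Lemma admissible_antitone (f : T -> R) (s t : R) (E : set T) :
  Fset f -> (0 <= s)%R -> (s < t)%R ->
  Ec t E /\ t%:E <= A t E f -> Ec s E /\ s%:E <= A s E f.
Proof.
move=> Ff s0 st [EtE tA]; have [Ets Ast] := A_antitone s t s0 st.
split; first exact: Ets.
have [->|/eqP E0] := eqVneq E set0; first by rewrite A_set0 leey.
apply: le_trans (Ast f E Ff EtE E0).
by apply: le_trans tA; rewrite lee_fin ltW.
Qed.

Hypothesis Ec_measurable : paving_process Ec.
Hypothesis mu_antitone : mu_nonincreasing mu.

Lemma gen_level_measure_antitone (f : T -> R) (s t : R) :
  Fset f -> (0 <= s)%R -> (s <= t)%R ->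
  gen_level_measure mu Ec A f t <= gen_level_measure mu Ec A f s.
Proof.
move=> Ff s0; rewrite le_eqVlt => /predU1P[<- //|st].
have t0 : (0 <= t)%R by rewrite (le_trans s0) ?ltW.
apply: ereal_sup_le_image => E admE.
split; first exact: admissible_antitone admE.
apply: mu_antitone => //.
have [_ EcT] := Ec_measurable t t0.
exact: EcT (proj1 admE).
Qed.

End level_measure_antitone.

Theorem proposition3p4 (d : measure_display) (T : measurableType d)
  (R : realType) (mu : R -> set T -> \bar R) (Ec : R -> set (set T))
  (A : R -> set T -> (T -> R) -> \bar R) :
  (forall t, (0 <= t)%R -> monotone_measure (mu t)) ->
  paving_process Ec ->
  pFCA Ec A ->
  mu_nonincreasing mu ->
  pFCA_nonincreasing Ec A ->
  forall f : T -> R, Fset f ->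
  forall s t : R, (0 <= s)%R -> (s <= t)%R ->
    gen_level_measure mu Ec A f t <= gen_level_measure mu Ec A f s.
Proof.
move=> _ Ec_meas [_ A_set0] mu_anti A_anti f Ff s t.
exact: gen_level_measure_antitone.
Qed.
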